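(* Let $T$ be a finite full binary tree with $N\ge 2$ leaves and fringe thickness at most $2$, and let $m=\lceil\log_2 N\rceil$. For $\sigma\in\{0,1\}$ put $M=m-\sigma$, $c^{\sigma}_{\min}=(N-2^M)\sigma$ and $c^{\sigma}_{\max}=\lfloor (2N-2^M)/3\rfloor$. Then there exist $\sigma\in\{0,1\}$ and an integer $c$ with $c^\sigma_{\min}\le c\le c^\sigma_{\max}$ such that $T$ has exactly $2^M-N+c$ leaves at depth $M-1$, exactly $2N-2^M-3c$ leaves at depth $M$, exactly $2c$ leaves at depth $M+1$, and no other leaves. Conversely, for every such $(\sigma,c)$ these numbers are nonnegative and are the leaf-depth counts of some full binary tree $T_{\sigma,c}$.
   Context: A full binary tree is one in which every node is a leaf or has exactly two children. The fringe thickness of a finite tree is the maximum difference between the depths of any two of its leaves. *)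

From mathcomp Require Import all_boot all_order all_algebra.
Set Implicit Arguments. Unset Strict Implicit. Unset Printing Implicit Defensive.
Import Order.TTheory GRing.Theory Num.Theory.

Inductive tree : Type := Leaf | Node of tree & tree.

Fixpoint leaf_depths (t : tree) : seq nat :=
  match t with
  | Leaf => [:: 0]
  | Node l r => [seq d.+1 | d <- leaf_depths l ++ leaf_depths r]
  end.

Definition num_leaves (t : tree) : nat := size (leaf_depths t).

Definition fringe_thickness (t : tree) : nat :=
  \max_(i <- leaf_depths t) \max_(j <- leaf_depths t) (i - j).

Definition leaves_at (t : tree) (k : int) : nat :=
  count (fun d : nat => (Posz d == k)) (leaf_depths t).

From mathcomp Require Import all_boot all_order all_algebra zify.
Import Order.TTheory GRing.Theory Num.Theory.
Set Implicit Arguments. Unset Strict Implicit. Unset Printing Implicit Defensive.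

(* Kraft's equality gives sum 2^(H - d) = 2^H over the leaf depths d, for any H
   bounding the height. Fringe thickness at most 2 puts every leaf at depth M - 1,
   M or M + 1 for a suitable M, and then the counts a, b, e satisfy
   a + b + e = N and 4a + 2b + e = 2^(M+1): they are determined by c = e / 2,
   the bounds on c say exactly that a, b, e are nonnegative, and these equations
   force 2^(M-1) < N <= 2^(M+1), i.e. M = m or M = m - 1. Conversely, counts
   obeying Kraft's equality split into two halves of equal weight, one for each
   subtree of the root, which are realized recursively. *)

Lemma sumn_map_window (f : nat -> nat) D s : all (fun d => D <= d <= D.+2) s ->
  sumn [seq f d | d <- s] =
    f D * count_mem D s + f D.+1 * count_mem D.+1 s + f D.+2 * count_mem D.+2 s.
Proof.
elim: s => [|x s IH] /=; first by rewrite !muln0.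
move=> /andP[hx /IH ->].
have [->|[->|->]] : x = D \/ x = D.+1 \/ x = D.+2 by lia.
all: by rewrite /= eqxx; do ![case: eqP => ?]; lia.
Qed.

Lemma num_leaves_gt0 T : 0 < num_leaves T.
Proof. by elim: T => //= l IHl r _; rewrite /num_leaves /= size_map size_cat ltn_addr. Qed.

Lemma kraft_eq T H : all (fun d => d <= H) (leaf_depths T) ->
  sumn [seq 2 ^ (H - d) | d <- leaf_depths T] = 2 ^ H.
Proof.
elim: T H => [|l IHl r IHr] H /=; first by rewrite subn0 addn0.
rewrite all_map all_cat -map_comp map_cat sumn_cat.
case: H => [|H] /andP[hl hr].
  by move: (num_leaves_gt0 l) hl; rewrite /num_leaves; case: (leaf_depths l).
have shift s : [seq 2 ^ (H.+1 - d.+1) | d <- s] = [seq 2 ^ (H - d) | d <- s].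
  by apply: eq_map => d; rewrite subSS.
by rewrite !shift IHl // IHr // expnS mul2n addnn.
Qed.

Lemma leaf_depths_gt0 T : 1 < num_leaves T -> all (fun d => 0 < d) (leaf_depths T).
Proof. by case: T => //= l r _; rewrite all_map; apply/allP. Qed.

Lemma leaf_depth_spread T i j : i \in leaf_depths T -> j \in leaf_depths T ->
  i - j <= fringe_thickness T.
Proof.
move=> hi hj; rewrite /fringe_thickness.
apply: leq_trans (leq_bigmax_seq (F := fun i => \max_(j <- _) (i - j)) i hi isT).
exact: (leq_bigmax_seq (F := fun j => i - j) j hj isT).
Qed.

Lemma thin_tree_window T : 1 < num_leaves T -> fringe_thickness T <= 2 ->
  exists D, all (fun d => D <= d <= D.+2) (leaf_depths T) /\
            has (fun d => D < d) (leaf_depths T).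
Proof.
move=> hN hthin; set s := leaf_depths T.
have spread i j : i \in s -> j \in s -> i - j <= 2.
  by move=> hi hj; apply: leq_trans hthin; exact: leaf_depth_spread.
have s_nonempty : exists d, d \in s.
  by exists (nth 0 s 0); apply: mem_nth; exact: ltnW.
have [lo lo_in lo_min] := ex_minnP s_nonempty.
case: (boolP (has (fun d => lo < d) s)) => [deep | /hasPn flat].
  exists lo; split=> //; apply/allP => d d_in.
  by rewrite lo_min //=; have := spread d lo d_in lo_in; lia.
have lo_gt0 : 0 < lo by have := allP (leaf_depths_gt0 hN) lo lo_in.
exists lo.-1; split; last by apply/hasP; exists lo => //; lia.
by apply/allP => d d_in; have := lo_min d d_in; have := flat d d_in; lia.
Qed.

Lemma window_counts T D (s := leaf_depths T) : all (fun d => D <= d <= D.+2) s ->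
  [/\ count_mem D s + count_mem D.+1 s + count_mem D.+2 s = num_leaves T,
      4 * count_mem D s + 2 * count_mem D.+1 s + count_mem D.+2 s = 2 ^ D.+2 &
      count (fun d => D < d) s = count_mem D.+1 s + count_mem D.+2 s].
Proof.
move=> win; split.
- have := sumn_map_window (fun d => nat_of_bool (predT d)) win.
  by rewrite sumn_count count_predT /= !mul1n => <-.
- have := sumn_map_window (fun d => 2 ^ (D.+2 - d)) win.
  rewrite kraft_eq; last by apply: sub_all win => d /andP[].
  by rewrite subnn subSnn subSn // subSnn expn0 expn1 mul1n => ->.
- by rewrite -sumn_count (sumn_map_window _ win) /= ltnn ltnSn (ltnW (ltnSn _)) mul0n !mul1n.
Qed.

Lemma up_log2_window D N : 2 ^ D < N <= 2 ^ D.+2 ->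
  exists2 sigma, sigma <= 1 & D.+1 = up_log 2 N - sigma.
Proof.
move=> /andP[lo hi]; case: (leqP N (2 ^ D.+1)) => mid.
  by exists 0 => //; rewrite subn0 (up_log_eq (n := D)) // lo.
by exists 1 => //; rewrite (up_log_eq (n := D.+1)) // mid.
Qed.

(* The side condition rules out P = 1 with a > 0: a unit of a has weight 2 and
   fits into neither half. *)
Lemma weight_halves P a b c : 2 * a + b + c = 2 * P -> a = 0 \/ 2 %| P ->
  exists a1 b1 c1 a2 b2 c2, [/\ a = a1 + a2, b = b1 + b2, c = c1 + c2,
    2 * a1 + b1 + c1 = P & 2 * a2 + b2 + c2 = P].
Proof.
move=> hw hP; set a1 := minn a (P %/ 2); set b1 := minn b (P - 2 * a1).
exists a1, b1, (P - 2 * a1 - b1), (a - a1), (b - b1), (c - (P - 2 * a1 - b1)).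
split; lia.
Qed.

Local Open Scope ring_scope.

Definition depth_profile (T : tree) (M : nat) (a b e : int) : Prop :=
  [/\ (leaves_at T (M%:Z - 1))%:Z = a, (leaves_at T M%:Z)%:Z = b,
      (leaves_at T (M%:Z + 1))%:Z = e &
      forall k : int, k != M%:Z - 1 -> k != M%:Z -> k != M%:Z + 1 -> leaves_at T k = 0%N].

Lemma leaves_at_nat T (d : nat) : leaves_at T d = count_mem d (leaf_depths T).
Proof. by apply: eq_count => x; rewrite /= eqz_nat. Qed.

Lemma leaves_at_Leaf k : leaves_at Leaf k = (k == 0).
Proof. by rewrite /leaves_at /= addn0 eq_sym. Qed.

Lemma leaves_at_Node l r k :
  leaves_at (Node l r) k = (leaves_at l (k - 1) + leaves_at r (k - 1))%N.
Proof.
rewrite /leaves_at /= count_map count_cat.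
by congr (_ + _)%N; apply: eq_count => d /=; rewrite intS addrC -subr_eq.
Qed.

Lemma depth_profile_Leaf0 : depth_profile Leaf 0 0 1 0.
Proof. by split=> // k; rewrite leaves_at_Leaf => _ /negbTE->. Qed.

Lemma depth_profile_Leaf1 : depth_profile Leaf 1 1 0 0.
Proof. by split=> // k /negbTE; rewrite leaves_at_Leaf => ->. Qed.

Lemma depth_profile_cherry : depth_profile (Node Leaf Leaf) 0 0 0 2.
Proof.
split=> [||| k _ _ hk]; rewrite leaves_at_Node !leaves_at_Leaf //.
by rewrite subr_eq0 (negbTE hk).
Qed.

Lemma depth_profile_Node l r M a b e a' b' e' :
  depth_profile l M a b e -> depth_profile r M a' b' e' ->
  depth_profile (Node l r) M.+1 (a + a') (b + b') (e + e').
Proof.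
move=> [la lb le l0] [ra rb re r0].
have lvl k : (leaves_at (Node l r) (k + 1))%:Z = (leaves_at l k)%:Z + (leaves_at r k)%:Z.
  by rewrite leaves_at_Node addrK PoszD.
rewrite /depth_profile.
have -> : M.+1%:Z - 1 = (M%:Z - 1) + 1 by lia.
have -> : M.+1%:Z = M%:Z + 1 by lia.
split; rewrite ?lvl ?la ?ra ?lb ?rb ?le ?re //.
move=> k h1 h2 h3; rewrite leaves_at_Node l0 ?r0 //; lia.
Qed.

Lemma depth_profile_window T D (s := leaf_depths T) :
  all (fun d => D <= d <= D.+2)%N s ->
  depth_profile T D.+1 (count_mem D s) (count_mem D.+1 s) (count_mem D.+2 s).
Proof.
move=> win; rewrite /depth_profile.
have -> : D.+1%:Z - 1 = D by lia.
have -> : D.+1%:Z + 1 = D.+2 by lia.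
rewrite !leaves_at_nat; split=> // k h0 h1 h2.
apply/eqP; rewrite eqn0Ngt -has_count; apply/hasPn => d /(allP win) hd.
by apply/negP => /eqP dk; move: h0 h1 h2; rewrite -dk; lia.
Qed.

Lemma thin_tree_depth_profile T : (1 < num_leaves T)%N -> (fringe_thickness T <= 2)%N ->
  exists D (a b e : nat), [/\ depth_profile T D.+1 a b e, (a + b + e = num_leaves T)%N,
    (4 * a + 2 * b + e = 2 ^ D.+2)%N & (0 < b + e)%N].
Proof.
move=> N_gt1 thin; have [D [win deep]] := thin_tree_window N_gt1 thin.
have [size_eq kraft deep_eq] := window_counts win.
exists D, (count_mem D (leaf_depths T)), (count_mem D.+1 (leaf_depths T)),
  (count_mem D.+2 (leaf_depths T)).
by rewrite -deep_eq -has_count; split=> //; exact: depth_profile_window.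
Qed.

Lemma exists_depth_profile (M a b c : nat) : (2 * a + b + c = 2 ^ M)%N ->
  exists T, depth_profile T M a b (2 * c)%N.
Proof.
elim: M a b c => [|M IH] a b c hw.
  have [[-> [-> ->]]|[-> [-> ->]]] : (a = 0 /\ b = 1 /\ c = 0 \/ a = 0 /\ b = 0 /\ c = 1)%N by lia.
  - by exists Leaf; exact: depth_profile_Leaf0.
  - by exists (Node Leaf Leaf); exact: depth_profile_cherry.
have [[-> [-> [-> ->]]] | hP] :
    (M = 0 /\ a = 1 /\ b = 0 /\ c = 0 \/ a = 0 \/ 2 %| 2 ^ M)%N.
  case: M {IH} hw => [|M] hw; last by right; right; rewrite expnS dvdn_mulr.
  by move: hw; rewrite expn1; lia.
by exists Leaf; exact: depth_profile_Leaf1.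
rewrite expnS in hw.
have [a1 [b1 [c1 [a2 [b2 [c2 [-> -> -> h1 h2]]]]]]] := weight_halves hw hP.
have [l hl] := IH _ _ _ h1; have [r hr] := IH _ _ _ h2.
by exists (Node l r); rewrite mulnDr !PoszD; exact: depth_profile_Node.
Qed.

Lemma pow2z n : 2 ^+ n = (2 ^ n)%N%:Z.
Proof. by rewrite -natz natrX. Qed.

Lemma shape_range_counts_ge0 (N m sigma : nat) (c : int) :
  (sigma <= 1)%N -> (2 ^ m.-1 < N <= 2 ^ m)%N ->
  ((N%:Z - 2 ^+ (m - sigma)) * sigma%:Z <= c <= ((2 * N%:Z - 2 ^+ (m - sigma)) %/ 3)%Z)
  = [&& 0 <= 2 ^+ (m - sigma) - N%:Z + c, 0 <= 2 * N%:Z - 2 ^+ (m - sigma) - 3 * c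
      & 0 <= c].
Proof.
move=> sig1 /andP[lo hi]; rewrite lez_divRL // pow2z.
case: sigma sig1 => [|[|//]] _; rewrite ?mulr0 ?mulr1 ?subn0 ?subn1 in lo hi *;
  by apply/andP/and3P => [[h1 h2]|[h1 h2 h3]]; split; lia.
Qed.

Theorem lemma7 (N : nat) (hN : (2 <= N)%N) :
  let m := up_log 2 N in
  let M (sigma : nat) : nat := (m - sigma)%N in
  let cmin (sigma : nat) : int := (N%:Z - 2 ^+ M sigma) * sigma%:Z in
  let cmax (sigma : nat) : int := ((2 * N%:Z - 2 ^+ M sigma) %/ 3)%Z in
  (forall T : tree, num_leaves T = N -> (fringe_thickness T <= 2)%N ->
     exists (sigma : nat) (c : int),
       [/\ (sigma <= 1)%N, cmin sigma <= c <= cmax sigma &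
         [/\ (leaves_at T ((M sigma)%:Z - 1))%:Z = 2 ^+ M sigma - N%:Z + c,
           (leaves_at T (M sigma)%:Z)%:Z = 2 * N%:Z - 2 ^+ M sigma - 3 * c,
           (leaves_at T ((M sigma)%:Z + 1))%:Z = 2 * c
         & forall k : int,
             k != (M sigma)%:Z - 1 -> k != (M sigma)%:Z -> k != (M sigma)%:Z + 1 ->
             leaves_at T k = 0%N]])
  /\
  (forall (sigma : nat) (c : int), (sigma <= 1)%N -> cmin sigma <= c <= cmax sigma ->
     [/\ 0 <= 2 ^+ M sigma - N%:Z + c,
         0 <= 2 * N%:Z - 2 ^+ M sigma - 3 * c,
         0 <= 2 * c
       & exists T : tree,
           [/\ (leaves_at T ((M sigma)%:Z - 1))%:Z = 2 ^+ M sigma - N%:Z + c,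
               (leaves_at T (M sigma)%:Z)%:Z = 2 * N%:Z - 2 ^+ M sigma - 3 * c,
               (leaves_at T ((M sigma)%:Z + 1))%:Z = 2 * c
             & forall k : int,
                 k != (M sigma)%:Z - 1 -> k != (M sigma)%:Z -> k != (M sigma)%:Z + 1 ->
                 leaves_at T k = 0%N]]).
Proof.
move=> m M cmin cmax; have m_bounds := up_log_bounds (isT : (1 < 2)%N) hN.
split=> [T NT thin | sigma c sig1].
  have N_gt1 : (1 < num_leaves T)%N by rewrite NT.
  have [D [a [b [e [profile size_eq kraft be_gt0]]]]] := thin_tree_depth_profile N_gt1 thin.
  rewrite NT in size_eq.
  have [sigma sig1 MD] : exists2 sigma, (sigma <= 1)%N & D.+1 = (m - sigma)%N.
    by apply: up_log2_window; rewrite !expnS in kraft *; lia.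
  exists sigma, (a%:Z + N%:Z - 2 ^+ D.+1).
  rewrite /cmin /cmax /M shape_range_counts_ge0 // -MD !pow2z.
  set c := _ + _ - _; rewrite expnS in kraft.
  have [ea eb ee] : [/\ a%:Z = (2 ^ D.+1)%N%:Z - N%:Z + c,
      b%:Z = 2 * N%:Z - (2 ^ D.+1)%N%:Z - 3 * c & e%:Z = 2 * c] by split; lia.
  split=> //; first by apply/and3P; split; lia.
  by move: profile; rewrite /depth_profile ea eb ee.
rewrite /cmin /cmax /M shape_range_counts_ge0 // !pow2z => /and3P[ha hb hc].
split=> //; first by lia.
case: c ha hb hc => [c|//] ha hb _; set P := (2 ^ (m - sigma))%N in ha hb *.
have kraft : (2 * (P + c - N) + (2 * N - P - 3 * c) + c = P)%N by lia.
have [T profile] := exists_depth_profile kraft.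
have [ea eb ee] : [/\ (P + c - N)%N%:Z = P%:Z - N%:Z + c%:Z,
    (2 * N - P - 3 * c)%N%:Z = 2 * N%:Z - P%:Z - 3 * c%:Z & (2 * c)%N%:Z = 2 * c%:Z].
  by split; lia.
by exists T; move: profile; rewrite /depth_profile ea eb ee.
Qed.
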